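(* Let $G$ be a non-compact, compactly generated tdlc group and $\Gamma$ a Cayley–Abels graph for $G$ of valency $d$. Let $K\le G$ be the kernel of the action of $G$ on $\Gamma$ and let $L\le\operatorname{Sym}(d)$ be the local action of $G$ on $\Gamma$. If a prime $p$ lies in the local prime content of $G/K$, then $p$ divides the order of the stabilizer in $L$ of some point of $\{1,\dots,d\}$. In particular, the local prime content of $G/K$ is finite.
   Context: A Cayley–Abels graph for a tdlc group $G$ is a locally finite, connected simple graph together with a vertex-transitive action of $G$ by graph automorphisms with compact open vertex stabilizers; its valency $d$ is the number of neighbours of each vertex. The kernel $K$ is the set of elements fixing all vertices. The local action of $G$ is the permutation group $G_\alpha/(G_\alpha\cap G_{\mathbf{N}(\alpha)})\le\operatorname{Sym}(\mathbf{N}(\alpha))$ induced by the vertex stabilizer $G_\alpha$ on the neighbour set $\mathbf{N}(\alpha)$, identified with a subgroup of $\operatorname{Sym}(d)$ via a bijection $\mathbf{N}(\alpha)\to\{1,\dots,d\}$ (well-defined up to conjugacy and independent of $\alpha$). The local prime content of a tdlc group $H$ is the set of primes $p$ such that every compact open subgroup $U\le H$ contains a compact open subgroup $V\le U$ with $p\mid[U:V]$. *)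

From HB Require Import structures.
From mathcomp Require Import all_boot all_order all_algebra all_fingroup.
From mathcomp Require Import all_classical all_reals all_analysis.
From Stdlib Require Import Relations.

Set Implicit Arguments.
Unset Strict Implicit.
Unset Printing Implicit Defensive.

Local Open Scope classical_set_scope.

Definition group_axioms (T : Type) (mul : T -> T -> T) (inv : T -> T) (one : T) :=
  [/\ forall x y z, mul x (mul y z) = mul (mul x y) z,
      forall x, mul one x = x &
      forall x, mul (inv x) x = one].

Definition is_subgroup (T : Type) (mul : T -> T -> T) (inv : T -> T) (one : T)
  (H : set T) :=
  [/\ H one, forall x y, H x -> H y -> H (mul x y) & forall x, H x -> H (inv x)].

Definition gen_subgroup (T : Type) (mul : T -> T -> T) (inv : T -> T) (one : T)
  (C : set T) : set T :=
  \bigcap_(H in [set H | is_subgroup mul inv one H /\ C `<=` H]) H.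

Definition tdlc_group (T : topologicalType) (mul : T -> T -> T) (inv : T -> T)
  (one : T) :=
  [/\ group_axioms mul inv one,
      continuous (fun xy : T * T => mul xy.1 xy.2) /\ continuous inv,
      hausdorff_space T,
      locally_compact [set: T] &
      totally_disconnected [set: T]].

Definition compactly_generated (T : topologicalType) (mul : T -> T -> T)
  (inv : T -> T) (one : T) :=
  exists C : set T, compact C /\ gen_subgroup mul inv one C = [set: T].

Definition compact_open_subgroup (T : topologicalType) (mul : T -> T -> T)
  (inv : T -> T) (one : T) (U : set T) :=
  [/\ is_subgroup mul inv one U, compact U & open U].

(* p divides the index [U : V]: U is the disjoint union of exactly n left
   cosets f i V (i < n) of V, with f i in U, and p %| n. *)
Definition dvd_index (T : Type) (mul : T -> T -> T) (U V : set T) (p : nat) :=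
  exists (n : nat) (f : 'I_n -> T),
    [/\ forall i, U (f i),
        forall u, U u -> exists! i, exists v, V v /\ u = mul (f i) v &
        (p %| n)%N].

Definition local_prime_content (T : topologicalType) (mul : T -> T -> T)
  (inv : T -> T) (one : T) : set nat :=
  [set p | prime p /\
     forall U, compact_open_subgroup mul inv one U ->
       exists V, [/\ compact_open_subgroup mul inv one V, V `<=` U &
                     dvd_index mul U V p]].

Definition lcoset (T : Type) (mul : T -> T -> T) (N : set T) (g : T) : set T :=
  [set mul g k | k in N].

(* elements of G/N are the left cosets gN *)
Definition cosets (T : Type) (mul : T -> T -> T) (N : set T) : Type :=
  {A : set T | exists g, A = lcoset mul N g}.

Section Quotient.
Context (T : topologicalType) (mul : T -> T -> T) (N : set T).

Local Notation Q := (cosets mul N).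

HB.instance Definition _ := gen_eqMixin Q.
HB.instance Definition _ := gen_choiceMixin Q.

Definition quot_pi (g : T) : Q := exist _ (lcoset mul N g) (ex_intro _ g erefl).

Definition quot_repr (A : Q) : T := projT1 (cid (proj2_sig A)).

Definition quot_open (W : set Q) := open (quot_pi @^-1` W).

Program Definition quot_topologicalType_mixin :=
  @isOpenTopological.Build Q quot_open _ _ _.
Next Obligation. by rewrite /quot_open preimage_setT; exact: openT. Qed.
Next Obligation. by move=> ? ? ? ?; exact: openI. Qed.
Next Obligation. by move=> I f ofi; apply: bigcup_open => i _; exact: ofi. Qed.
HB.instance Definition _ := quot_topologicalType_mixin.

Definition quot_mul (A B : Q) : Q := quot_pi (mul (quot_repr A) (quot_repr B)).
Definition quot_inv (inv : T -> T) (A : Q) : Q := quot_pi (inv (quot_repr A)).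
Definition quot_one (one : T) : Q := quot_pi one.

End Quotient.

Definition action_kernel (T V : Type) (act : T -> V -> V) : set T :=
  [set g | forall v, act g v = v].

Definition vertex_stab (T V : Type) (act : T -> V -> V) (v : V) : set T :=
  [set g | act g v = v].

Definition cayley_abels_graph (T : topologicalType) (mul : T -> T -> T)
  (one : T) (V : Type) (adj : V -> V -> Prop) (act : T -> V -> V) (d : nat) :=
  [/\
      (forall u v, adj u v -> adj v u) /\ (forall v, ~ adj v v),
      inhabited V /\ (forall u v, clos_refl_trans V adj u v),
      (forall v, exists b : 'I_d -> V, injective b /\ range b = adj v),
      [/\ forall v, act one v = v,
          forall g h v, act (mul g h) v = act g (act h v) &
          forall g u v, adj u v <-> adj (act g u) (act g v)] &
      (forall u v, exists g, act g u = v) /\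
      (forall v, compact (vertex_stab act v) /\ open (vertex_stab act v))].

(* The local action at alpha, identified with a subgroup of Sym(d) via the
   bijection b : 'I_d -> N(alpha): the permutations s such that some g in
   G_alpha acts on N(alpha) as b \o s \o b^-1. *)
Definition local_action (T V : Type) (act : T -> V -> V) (alpha : V) (d : nat)
  (b : 'I_d -> V) : {set 'S_d} :=
  [set s : 'S_d | `[< exists g, act g alpha = alpha /\
                                forall i, act g (b i) = b (s i) >]].

Definition perm_point_stab (d : nat) (L : {set 'S_d}) (i : 'I_d) : {set 'S_d} :=
  [set s in L | s i == i].

From Pilot Require Import Defs.
From HB Require Import structures.
From mathcomp Require Import all_boot all_order all_algebra all_fingroup.
From mathcomp Require Import all_classical all_reals all_analysis.
From mathcomp Require pgroup cyclic.
From Stdlib Require Import Relations.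

(* Let W be the pointwise stabiliser of the unit ball around alpha: a compact open
   subgroup containing the kernel K, so its image is compact open in G/K. A prime p
   of the local prime content of G/K divides the index in it of some compact open
   subgroup; the preimage of that subgroup is an open set containing K, so by
   compactness of W it contains the pointwise stabiliser of a ball of some radius R.
   The index therefore survives in the finite permutation group induced by W on that
   ball, and Cauchy's theorem gives g in W acting there with order p. At the least
   radius where g moves a vertex, g fixes a vertex u and one of its neighbours but
   moves another neighbour; transported to alpha by vertex-transitivity, this is an
   element of order p in a point stabiliser of the local action. Finiteness follows
   since such p are bounded by d!. *)

Set Implicit Arguments.
Unset Strict Implicit.
Unset Printing Implicit Defensive.
Local Open Scope classical_set_scope.

Section GroupAxioms.
Variables (T : Type) (mul : T -> T -> T) (inv : T -> T) (one : T).
Hypothesis GA : group_axioms mul inv one.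

Lemma gmulA x y z : mul x (mul y z) = mul (mul x y) z. Proof. by case: GA. Qed.
Lemma gmul1 x : mul one x = x. Proof. by case: GA. Qed.
Lemma gmulV x : mul (inv x) x = one. Proof. by case: GA. Qed.

Lemma gmulI a : injective (mul a).
Proof. by move=> x y h; rewrite -(gmul1 x) -(gmul1 y) -(gmulV a) -!gmulA h. Qed.

Lemma gmulVr x : mul x (inv x) = one.
Proof.
have idem : mul (mul x (inv x)) (mul x (inv x)) = mul x (inv x).
  by rewrite -gmulA [mul (inv x) _]gmulA gmulV gmul1.
by have := congr1 (mul (inv (mul x (inv x)))) idem; rewrite gmulA !gmulV gmul1.
Qed.

Lemma gmul1r x : mul x one = x.
Proof. by rewrite -(gmulV x) gmulA gmulVr gmul1. Qed.

Lemma ginvK x : inv (inv x) = x.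
Proof. by apply: (@gmulI (inv x)); rewrite gmulV gmulVr. Qed.

Lemma ginvM x y : inv (mul x y) = mul (inv y) (inv x).
Proof.
apply: (@gmulI (mul x y)).
by rewrite gmulVr -gmulA [mul y _]gmulA gmulVr gmul1 gmulVr.
Qed.

Lemma gmulK x y : mul (inv x) (mul x y) = y.
Proof. by rewrite gmulA gmulV gmul1. Qed.

Lemma gmulKV x y : mul x (mul (inv x) y) = y.
Proof. by rewrite gmulA gmulVr gmul1. Qed.

End GroupAxioms.

Section Quotient.
Variables (G : topologicalType) (mul : G -> G -> G) (inv : G -> G) (one : G).
Hypothesis GA : group_axioms mul inv one.
Variable N : set G.
Hypothesis N_subgroup : is_subgroup mul inv one N.
Hypothesis N_normal : forall g k, N k -> N (mul (inv g) (mul k g)).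

Local Notation pi := (quot_pi mul N).
Local Notation qmul := (@quot_mul G mul N).
Local Notation qinv := (@quot_inv G mul N inv).
Local Notation qone := (quot_one mul N one).

Lemma quot_piP a b : pi a = pi b <-> exists2 k, N k & b = mul a k.
Proof.
have [N1 NM NV] := N_subgroup; split.
  move=> /(congr1 (@proj1_sig _ _)) /= e.
  have : Defs.lcoset mul N b b by exists one; rewrite ?(gmul1r GA).
  by rewrite -e => -[k Nk <-]; exists k.
case=> k Nk ->; apply: eq_exist; apply/seteqP; split=> _ [y Ny <-].
  exists (mul (inv k) y); first exact: NM (NV _ Nk) Ny.
  by rewrite (gmulA GA) -(gmulA GA a) (gmulVr GA) (gmul1r GA).
by exists (mul k y); rewrite ?(gmulA GA) //; exact: NM.
Qed.

Lemma quot_reprK : cancel (@quot_repr G mul N) pi.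
Proof.
case=> A hA; apply: eq_exist => /=.
by rewrite /quot_repr /=; case: (cid hA) => /= g ->.
Qed.

Lemma quot_repr_pi a : exists2 k, N k & quot_repr (pi a) = mul a k.
Proof. by apply/quot_piP; rewrite quot_reprK. Qed.

Lemma quot_pi_kernel k : N k -> pi k = qone.
Proof. by move=> Nk; apply/esym/quot_piP; exists k; rewrite ?(gmul1 GA). Qed.

Lemma quot_pi_mul a b : qmul (pi a) (pi b) = pi (mul a b).
Proof.
have [_ NM _] := N_subgroup.
rewrite /quot_mul; have [k1 N1 ->] := quot_repr_pi a; have [k2 N2 ->] := quot_repr_pi b.
apply/esym/quot_piP; exists (mul (mul (inv b) (mul k1 b)) k2).
  exact: NM (N_normal _ N1) N2.
by rewrite !(gmulA GA) -(gmulA GA a b) (gmulVr GA) (gmul1r GA) -!(gmulA GA).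
Qed.

Lemma quot_pi_inv a : qinv (pi a) = pi (inv a).
Proof.
have [_ _ NV] := N_subgroup.
rewrite /quot_inv; have [k Nk ->] := quot_repr_pi a.
apply/esym/quot_piP; exists (mul (inv (inv a)) (mul (inv k) (inv a))).
  exact/N_normal/NV.
by rewrite (ginvK GA) (ginvM GA) (gmulK GA).
Qed.

Lemma quot_group_axioms : group_axioms qmul qinv qone.
Proof.
split=> [A B C|A|A].
- rewrite -[A]quot_reprK -[B]quot_reprK -[C]quot_reprK !quot_pi_mul.
  by rewrite (gmulA GA).
- by rewrite -[A]quot_reprK quot_pi_mul (gmul1 GA).
- by rewrite -[A]quot_reprK quot_pi_inv quot_pi_mul (gmulV GA).
Qed.

Lemma quot_pi_continuous : continuous pi.
Proof. by apply/continuousP => A; apply. Qed.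

Lemma quot_preimage_image (H : set G) : is_subgroup mul inv one H -> N `<=` H ->
  pi @^-1` (pi @` H) = H.
Proof.
case=> _ HM _ NH; apply/seteqP; split=> [x /= [h Hh /quot_piP [k Nk ->]]|x Hx].
  exact/HM/NH.
by exists x.
Qed.

Lemma quot_compact_open_subgroup (H : set G) :
  compact_open_subgroup mul inv one H -> N `<=` H ->
  compact_open_subgroup qmul qinv qone (pi @` H).
Proof.
move=> [[H1 HM HV] cH oH] NH; split.
- split; first by exists one.
  + move=> _ _ [x Hx <-] [y Hy <-].
    by rewrite quot_pi_mul; exists (mul x y) => //; exact: HM.
  + by move=> _ [x Hx <-]; rewrite quot_pi_inv; exists (inv x) => //; exact: HV.
- apply: continuous_compact cH.
  exact/continuous_subspaceT/quot_pi_continuous.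
- by rewrite /open /= /quot_open quot_preimage_image.
Qed.

End Quotient.

Section TopologicalGroup.
Variables (G : topologicalType) (mul : G -> G -> G) (inv : G -> G) (one : G).
Hypothesis GA : group_axioms mul inv one.
Hypothesis mul_continuous : continuous (fun xy : G * G => mul xy.1 xy.2).

Lemma lmul_continuous c : continuous (mul c).
Proof.
move=> x; apply: (@continuous2_cvg _ _ _ _ _ _ (fun _ => c) id mul c x).
- exact: (@mul_continuous (c, x)).
- exact: cvg_cst.
- exact: cvg_id.
Qed.

Lemma open_lcoset (A : set G) g : open A -> open (Defs.lcoset mul A g).
Proof.
have -> : Defs.lcoset mul A g = mul (inv g) @^-1` A.
  apply/seteqP; split=> [_ [h Ah <-]|x Ax]; first by rewrite /= (gmulK GA).
  by exists (mul (inv g) x); rewrite ?(gmulKV GA).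
by apply: (proj1 (continuousP _)); exact: lmul_continuous.
Qed.

Lemma open_subgroup_closed (H : set G) :
  is_subgroup mul inv one H -> open H -> closed H.
Proof.
case=> H1 HM HV oH; rewrite -[H]setCK; apply: open_closedC.
have -> : ~` H = \bigcup_(g in ~` H) Defs.lcoset mul H g.
  apply/seteqP; split=> [x Hx|x [g Hg [h Hh <-]] Hgh].
    by exists x => //; exists one; rewrite ?(gmul1r GA).
  by apply: Hg; have := HM _ _ Hgh (HV _ Hh); rewrite -(gmulA GA) (gmulVr GA) (gmul1r GA).
by apply: bigcup_open => g _; exact: open_lcoset.
Qed.

End TopologicalGroup.

(* [V] with the classical decidable equality, so that finite sets of vertices can be
   listed as sequences. *)
Definition vertexT (V : Type) : Type := V.
HB.instance Definition _ (V : Type) := gen_eqMixin (vertexT V).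
HB.instance Definition _ (V : Type) := gen_choiceMixin (vertexT V).

Fixpoint graph_ball (V : Type) (adj : V -> V -> Prop) (alpha : V) (r : nat) : set V :=
  if r is r'.+1 then
    graph_ball adj alpha r' `|` [set v | exists2 u, graph_ball adj alpha r' u & adj u v]
  else [set alpha].

Section GraphBall.
Variables (V : Type) (adj : V -> V -> Prop) (alpha : V).
Local Notation ball := (graph_ball adj alpha).

Lemma graph_ball_le r r' : (r <= r')%N -> ball r `<=` ball r'.
Proof. by move=> /subnK <-; elim: (r' - r)%N => //= k IH v /IH; left. Qed.

Lemma graph_ball_reach v : clos_refl_trans V adj alpha v -> exists r, ball r v.
Proof.
move=> h; elim: (clos_rt_rtn1 _ _ _ _ h) => [|y z yz _ [r ry]]; first by exists 0%N.
by exists r.+1; right; exists y.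
Qed.

Lemma graph_ball_hom (f : V -> V) : f alpha = alpha ->
  (forall u v, adj u v -> adj (f u) (f v)) -> forall r v, ball r v -> ball r (f v).
Proof.
move=> fa fadj; elim=> [_ ->//|r IH v [/IH|[u /IH fu uv]]]; first by left.
by right; exists (f u) => //; exact: fadj.
Qed.

Lemma graph_ball_enum :
  (forall u, exists s : seq (vertexT V), forall v, v \in s <-> adj u v) ->
  forall r, exists s : seq (vertexT V), forall v, v \in s <-> ball r v.
Proof.
move=> /choice [nbrs nbrsP]; pose nbrsT : vertexT V -> _ := nbrs.
elim=> [|r [s sP]].
  by exists [:: alpha : vertexT V] => v; rewrite inE; split=> [/eqP|->].
exists (s ++ flatten [seq nbrsT u | u <- s]) => v; rewrite mem_cat; split.
  case/orP=> [/sP|]; first by left.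
  by case/flatten_mapP=> u /sP su /nbrsP uv; right; exists u.
case=> [/sP ->//|[u /sP su /nbrsP uv]].
by apply/orP; right; apply/flatten_mapP; exists u.
Qed.

(* u' and u lie at distances m - 2 and m - 1, where m is the least radius at which f
   moves a vertex. *)
Lemma exists_fixed_edge_at_moved (f : V -> V) R :
  (forall v, ball 1 v -> f v = v) -> (exists2 v, ball R v & f v <> v) ->
  exists u u', [/\ adj u' u, f u = u, f u' = u',
    exists2 v, adj u v & f v <> v & forall v, adj u v -> ball R v].
Proof.
move=> fix1 moved.
pose P r := `[< exists2 v, ball r v & f v <> v >].
have [m /asboolP [v vm fv] m_min] := ex_minnP (ex_intro P R (asboolT moved)).
have fixed r z : (r < m)%N -> ball r z -> f z = z.
  move=> rm zr; apply: contrapT => fz.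
  by have := m_min r (asboolT (ex_intro2 _ _ z zr fz)); rewrite leqNgt rm.
have mR : (m <= R)%N by apply: m_min; exact: asboolT.
case: m m_min mR fixed vm fv => [|[|n]] _ mR fixed vm fv.
- by case: fv; apply: fix1; left.
- by case: fv; apply: fix1.
case: vm => [vn|[u [un|[u' u'n u'u]] uv]]; first by case: fv; exact: (fixed n.+1).
  by case: fv; apply: (fixed n.+1) => //; right; exists u.
exists u, u'; split=> //.
- by apply: (fixed n.+1) => //; right; exists u'.
- by apply: (fixed n.+1) => //; left.
- by exists v.
- by move=> w uw; apply: (graph_ball_le mR); right; exists u => //; right; exists u'.
Qed.

End GraphBall.

Definition pointwise_stab (G V : Type) (act : G -> V -> V) (S : set V) : set G :=
  [set g | forall v, S v -> act g v = v].

Section Action.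
Variables (G : Type) (mul : G -> G -> G) (inv : G -> G) (one : G).
Hypothesis GA : group_axioms mul inv one.
Variables (V : Type) (act : G -> V -> V).
Hypothesis act1 : forall v, act one v = v.
Hypothesis actM : forall g h v, act (mul g h) v = act g (act h v).

Lemma act_invK g : cancel (act g) (act (inv g)).
Proof. by move=> v; rewrite -actM (gmulV GA). Qed.

Lemma act_invKV g : cancel (act (inv g)) (act g).
Proof. by move=> v; rewrite -actM (gmulVr GA). Qed.

Lemma pointwise_stab_subgroup S : is_subgroup mul inv one (pointwise_stab act S).
Proof.
split=> [v _ //|x y Sx Sy v Sv|x Sx v Sv]; first by rewrite actM Sy ?Sx.
by rewrite -{1}(Sx v Sv) act_invK.
Qed.

Lemma pointwise_stabS S S' : S `<=` S' -> pointwise_stab act S' `<=` pointwise_stab act S.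
Proof. by move=> SS' g Sg v /SS'; exact: Sg. Qed.

Lemma action_kernel_stab S : action_kernel act `<=` pointwise_stab act S.
Proof. by move=> k Kk v _; exact: Kk. Qed.

Lemma action_kernel_subgroup : is_subgroup mul inv one (action_kernel act).
Proof.
split=> [v //|x y Kx Ky v|x Kx v]; first by rewrite actM Ky Kx.
by rewrite -{1}(Kx v) act_invK.
Qed.

Lemma action_kernel_normal g k :
  action_kernel act k -> action_kernel act (mul (inv g) (mul k g)).
Proof. by move=> Kk v; rewrite !actM Kk act_invK. Qed.

Lemma iter_act_conj h g k w :
  iter k (act (mul h (mul g (inv h)))) w = act h (iter k (act g) (act (inv h) w)).
Proof. by elim: k => [|k /= ->]; rewrite ?act_invKV // !actM act_invK. Qed.

Section ActPerm.
Variables (H : set G) (S : set V) (s : seq (vertexT V)).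
Hypothesis H_subgroup : is_subgroup mul inv one H.
Hypothesis s_S : forall v, v \in s <-> S v.
Hypothesis H_S : forall g v, H g -> S v -> S (act g v).

Definition act_perm_fun g (x : seq_sub s) : seq_sub s :=
  insubd x (act g (val x) : vertexT V).

(* The identity when [act g] does not permute [s], which never happens on [H]. *)
Definition act_perm g : {perm seq_sub s} :=
  if pselect (injective (act_perm_fun g)) is left inj then perm inj else 1%g.

Lemma act_perm_funE g x : H g -> val (act_perm_fun g x) = act g (val x).
Proof. by move=> Hg; rewrite insubdK //; apply/s_S/H_S/s_S/valP. Qed.

Lemma act_permE g x : H g -> val (act_perm g x) = act g (val x).
Proof.
move=> Hg; rewrite /act_perm; case: pselect => [inj|].
  by rewrite permE act_perm_funE.
case=> y z /(congr1 val); rewrite !act_perm_funE // => /(can_inj (act_invK g)).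
exact: val_inj.
Qed.

Lemma act_permM g h : H g -> H h -> act_perm (mul g h) = (act_perm h * act_perm g)%g.
Proof.
have [_ HM _] := H_subgroup => Hg Hh; apply/permP => x; apply: val_inj.
by rewrite permM !act_permE ?actM //; exact: HM.
Qed.

Lemma act_permX g k x : H g -> val ((act_perm g ^+ k)%g x) = iter k (act g) (val x).
Proof. by move=> Hg; rewrite permX; elim: k => //= k <-; rewrite act_permE. Qed.

Lemma act_perm_eq1 g : H g -> act_perm g = 1%g <-> pointwise_stab act S g.
Proof.
move=> Hg; split=> [g1 v Sv|Sg].
  by have := act_permE (SeqSub (proj2 (s_S v) Sv)) Hg; rewrite g1 perm1.
by apply/permP => x; apply: val_inj; rewrite act_permE // perm1 Sg //; exact/s_S/valP.
Qed.

End ActPerm.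

End Action.

Section IndexImage.
Variables (T : Type) (mul : T -> T -> T) (inv : T -> T) (one : T).
Hypothesis GA : group_axioms mul inv one.
Variables (gT : finGroupType) (phi : T -> gT) (U Vs : set T).
Hypothesis U_subgroup : is_subgroup mul inv one U.
Hypothesis Vs_subgroup : is_subgroup mul inv one Vs.
Hypothesis Vs_sub : Vs `<=` U.
Hypothesis phiM : forall x y, U x -> U y -> phi (mul x y) = (phi x * phi y)%g.
Hypothesis phi_ker : forall x, U x -> phi x = 1%g -> Vs x.

Let image (A : set T) : {set gT} := [set x | `[< exists2 u, A u & phi u = x >]].

Lemma morph_one : phi one = 1%g.
Proof.
have [U1 _ _] := U_subgroup.
by apply: (mulgI (phi one)); rewrite -phiM // (gmul1 GA) mulg1.
Qed.

Lemma morph_inv x : U x -> phi (inv x) = (phi x)^-1%g.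
Proof.
have [_ _ UV] := U_subgroup => Ux.
by apply/esym/eqP; rewrite eq_invg_mul -phiM ?(gmulVr GA) ?morph_one //; exact: UV.
Qed.

Lemma image_group (A : set T) :
  is_subgroup mul inv one A -> A `<=` U -> group_set (image A).
Proof.
case=> A1 AM _ AU; apply/group_setP; split.
  by rewrite inE; apply/asboolP; exists one; rewrite ?morph_one.
move=> a b; rewrite !inE => -[x Ax <-] [y Ay <-].
by exists (mul x y); [exact: AM | rewrite phiM //; exact: AU].
Qed.

Lemma dvd_index_image p : dvd_index mul U Vs p -> (p %| #|image U|)%N.
Proof.
case=> n [f [fU f_cover pn]].
pose UG := Group (image_group U_subgroup (@subset_refl _ U)).
pose VG := Group (image_group Vs_subgroup Vs_sub).
have VU : VG \subset UG.
  apply/fintype.subsetP => a; rewrite !inE => -[v Vv <-].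
  by exists v => //; exact: Vs_sub.
pose c i := (phi (f i) *: VG)%g.
have c_inj : injective c.
  move=> i j cij.
  have : phi (f i) \in c j by rewrite -cij lcoset_refl.
  case/lcosetP=> a; rewrite inE => /asboolP [v Vv <-] fij.
  have [_ UM UV] := U_subgroup.
  have Uv := Vs_sub Vv; have Ufv : U (mul (f j) v) := UM _ _ (fU j) Uv.
  have Ufv' := UV _ Ufv.
  pose k := mul (inv (mul (f j) v)) (f i).
  have Vk : Vs k.
    apply: phi_ker; first exact: UM _ _ Ufv' (fU i).
    by rewrite phiM ?morph_inv ?phiM ?fij ?mulVg.
  have [i0 [_ uniq]] := f_cover _ (fU i).
  rewrite -(uniq i); last by exists one; rewrite ?(gmul1r GA); case: Vs_subgroup.
  apply: uniq; exists (mul v k); split; first by case: Vs_subgroup => _ VM _; exact: VM.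
  by rewrite /k (gmulA GA) (gmulKV GA).
have index_n : #|UG : VG|%g = n.
  rewrite -card_lcosets -[n]card_ord -(card_imset _ c_inj); apply: eq_card => C.
  apply/lcosetsP/imsetP => [[a]|[i _ ->]].
    rewrite inE => /asboolP [u Uu <-] ->.
    have [i [[v [Vv ->]] _]] := f_cover u Uu.
    exists i => //; rewrite phiM ?lcosetM; [|exact: fU|exact: Vs_sub].
    by rewrite (@lcoset_id _ VG) // inE; apply/asboolP; exists v.
  by exists (phi (f i)) => //; rewrite inE; apply/asboolP; exists (f i).
by rewrite -(Lagrange VU) index_n dvdn_mull.
Qed.

Lemma Cauchy_image p : prime p -> dvd_index mul U Vs p -> exists2 u, U u & #[phi u]%g = p.
Proof.
move=> pp /dvd_index_image pU.
have UG := image_group U_subgroup (@subset_refl _ U).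
case: (pgroup.Cauchy (G := Group UG) pp pU) => a; rewrite inE => /asboolP [u Uu <-].
by exists u.
Qed.

End IndexImage.

Section CayleyAbels.
Variables (G : topologicalType) (mul : G -> G -> G) (inv : G -> G) (one : G).
Hypothesis GA : group_axioms mul inv one.
Hypothesis mul_continuous : continuous (fun xy : G * G => mul xy.1 xy.2).
Variables (V : Type) (adj : V -> V -> Prop) (act : G -> V -> V) (d : nat).
Hypothesis adj_sym : forall u v, adj u v -> adj v u.
Hypothesis connected : forall u v, clos_refl_trans V adj u v.
Hypothesis nbhd : forall v, exists b : 'I_d -> V, injective b /\ range b = adj v.
Hypothesis act1 : forall v, act one v = v.
Hypothesis actM : forall g h v, act (mul g h) v = act g (act h v).
Hypothesis act_adj : forall g u v, adj u v <-> adj (act g u) (act g v).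
Hypothesis transitive : forall u v, exists g, act g u = v.
Hypothesis stab_compact_open :
  forall v, compact (vertex_stab act v) /\ open (vertex_stab act v).
Variable alpha : V.

Local Notation K := (action_kernel act).
Local Notation ball := (graph_ball adj alpha).
Local Notation W := (pointwise_stab act (ball 1)).

Let stab_subgroup S := pointwise_stab_subgroup GA act1 actM S.

Lemma locally_finite u : exists s : seq (vertexT V), forall v, v \in s <-> adj u v.
Proof.
have [b [_ bP]] := nbhd u; exists [seq (b i : vertexT V) | i <- enum 'I_d] => v.
rewrite -bP; split=> [/mapP [i _ ->]|[i _ <-]]; first by exists i.
by apply/mapP; exists i; rewrite ?mem_enum.
Qed.

Lemma pointwise_stab_seq_open (s : seq (vertexT V)) :
  open (pointwise_stab act [set v | (v : vertexT V) \in s]).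
Proof.
elim: s => [|x s IH].
  rewrite (_ : pointwise_stab _ _ = setT); first exact: openT.
  by apply/seteqP; split=> g // _ v /=; rewrite in_nil.
rewrite (_ : pointwise_stab _ _ =
    vertex_stab act x `&` pointwise_stab act [set v | (v : vertexT V) \in s]).
  exact: openI (stab_compact_open x).2 IH.
apply/seteqP; split=> [g gs|g [gx gs] v]; last by rewrite /= inE => /orP [/eqP ->|/gs].
by split=> [|v vs]; apply: gs; rewrite /= inE ?eqxx ?vs ?orbT.
Qed.

Lemma pointwise_stab_ball_open r : open (pointwise_stab act (ball r)).
Proof.
have [s sP] := graph_ball_enum alpha locally_finite r.
suff -> : ball r = [set v | (v : vertexT V) \in s] by exact: pointwise_stab_seq_open.
by apply/seteqP; split=> v /sP.
Qed.

Lemma pointwise_stab_ball1_compact : compact W.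
Proof.
have -> : W = vertex_stab act alpha `&` W.
  by apply/seteqP; split=> [g Wg|g []//]; split=> //; apply: Wg; left.
apply: compact_closedI; first exact: (stab_compact_open alpha).1.
exact: open_subgroup_closed GA mul_continuous _ (stab_subgroup _)
  (pointwise_stab_ball_open 1).
Qed.

(* An element g outside O moves some vertex v, and so does the whole open coset of
   g modulo the stabiliser of v; covering the compact set W by such cosets and by O
   yields a uniform radius. *)
Lemma pointwise_stab_ball_sub_open (O : set G) : open O -> K `<=` O ->
  exists R, pointwise_stab act (ball R) `<=` O.
Proof.
move=> oO KO.
have : \forall R \near \oo, W `<=` [set g | pointwise_stab act (ball R) g -> O g].
  apply: (proj1 (compact_near_coveringP _) pointwise_stab_ball1_compact) => g _.
  have [Og|nOg] := pselect (O g).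
    exists (O, setT); last by move=> [x i] [/= Ox].
    by split; [apply: open_nbhs_nbhs; split | exact: filterT].
  have [v gv] : exists v, act g v <> v.
    by apply: contra_notP nOg => /forallNP gK; apply: KO => v; apply: contrapT; exact: gK.
  have [r rv] := graph_ball_reach (connected alpha v).
  exists (Defs.lcoset mul (vertex_stab act v) g, [set i | (r <= i)%N]).
    split=> /=; last by exists r.
    apply: open_nbhs_nbhs; split; last by exists one; rewrite ?(gmul1r GA).
    exact: open_lcoset GA mul_continuous _ _ (stab_compact_open v).2.
  case=> x i [/= [h hv <-] ri] xi; case: gv.
  by have := xi v (graph_ball_le ri rv); rewrite actM hv.
case=> R0 _ /(_ R0.+1 (leqnSn R0)) R0P; exists R0.+1 => g Rg.
by apply: R0P => //; apply: pointwise_stabS Rg; exact: graph_ball_le.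
Qed.

Lemma graph_ball_act r g v : W g -> ball r v -> ball r (act g v).
Proof.
move=> Wg; apply: graph_ball_hom; first by apply: Wg; left.
by move=> u w /(act_adj g).
Qed.

Local Notation pi := (quot_pi mul K).
Local Notation qmul := (@quot_mul G mul K).
Local Notation qinv := (@quot_inv G mul K inv).
Local Notation qone := (quot_one mul K one).

Let K_subgroup := action_kernel_subgroup GA act1 actM.
Let K_normal := action_kernel_normal GA act1 actM.

Lemma quot_pointwise_stab_ball1 : compact_open_subgroup qmul qinv qone (pi @` W).
Proof.
apply: (quot_compact_open_subgroup GA K_subgroup K_normal).
  split; [exact: stab_subgroup | exact: pointwise_stab_ball1_compact |
         exact: pointwise_stab_ball_open].
exact: action_kernel_stab.
Qed.

Section BallPermutation.
Variables (R : nat) (s : seq (vertexT V)).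
Hypothesis s_ball : forall v, v \in s <-> ball R v.

Local Notation phi := (act_perm act s).
Let phiM := act_permM GA act1 actM (stab_subgroup _) s_ball (@graph_ball_act R).
Let phi_eq1 := act_perm_eq1 GA act1 actM s_ball (@graph_ball_act R).
Let phiX := act_permX GA act1 actM s_ball (@graph_ball_act R).

Lemma quot_repr_stab1 A : (pi @` W) A -> W (quot_repr A).
Proof.
case=> w Ww <-; have [k Kk ->] := quot_repr_pi GA K_subgroup w.
by have [_ WM _] := stab_subgroup (ball 1); apply: WM Ww (action_kernel_stab Kk).
Qed.

Lemma act_perm_quot_repr x : W x -> phi (quot_repr (pi x)) = phi x.
Proof.
move=> Wx; have [k Kk ->] := quot_repr_pi GA K_subgroup x.
have Wk : W k by exact: action_kernel_stab.
by rewrite phiM // (proj2 (phi_eq1 Wk)) ?mul1g //; exact: action_kernel_stab.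
Qed.

Lemma exists_prime_order_motion p (VQ : set (cosets mul K)) :
  prime p -> is_subgroup qmul qinv qone VQ -> VQ `<=` pi @` W ->
  dvd_index qmul (pi @` W) VQ p -> pointwise_stab act (ball R) `<=` pi @^-1` VQ ->
  exists2 g, W g & (exists2 v, ball R v & act g v <> v) /\
                   (forall v, ball R v -> iter p (act g) v = v).
Proof.
move=> pp VQ_subgroup VQW dvdW stabR.
have [WQ_subgroup _ _] := quot_pointwise_stab_ball1.
(* [act_perm] reverses products, so its pointwise inverse is a morphism. *)
pose psi (A : cosets mul K) := ((phi (quot_repr A))^-1)%g.
have [A WA] : exists2 A, (pi @` W) A & #[psi A]%g = p.
  apply: (Cauchy_image (quot_group_axioms GA K_subgroup K_normal) WQ_subgroup
            VQ_subgroup VQW _ _ pp dvdW) => [A B WA WB|A WA /eqP].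
    have [_ WM _] := stab_subgroup (ball 1).
    rewrite /psi /quot_mul act_perm_quot_repr; last by apply: WM; exact: quot_repr_stab1.
    by rewrite phiM ?invMg //; exact: quot_repr_stab1.
  rewrite /psi invg_eq1 => /eqP /(phi_eq1 (quot_repr_stab1 WA)) /stabR.
  by rewrite /= quot_reprK.
rewrite /psi orderV => order_p; have Wg := quot_repr_stab1 WA.
exists (quot_repr A) => //; split.
  apply: contrapT => still; move: pp; rewrite -order_p (proj2 (phi_eq1 Wg)) ?order1 //.
  by move=> v Rv; apply: contrapT => gv; apply: still; exists v.
move=> v Rv; have := phiX p (SeqSub (proj2 (s_ball v) Rv)) Wg.
by rewrite -order_p expg_order perm1 => <-.
Qed.

End BallPermutation.

Section LocalAction.
Variable b : 'I_d -> V.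
Hypothesis b_inj : injective b.
Hypothesis b_range : range b = adj alpha.
Local Notation L := (local_action act alpha b).

Let act_invK := act_invK GA act1 actM.

Lemma perm_point_stab_group i : group_set (perm_point_stab L i).
Proof.
apply/group_setP; split.
  rewrite inE perm1 eqxx andbT inE; apply/asboolP; exists one; split=> // j.
  by rewrite act1 perm1.
move=> x y; rewrite !inE => /andP [/asboolP [g [ga gb]] /eqP xi].
move=> /andP [/asboolP [h [ha hb]] /eqP yi].
rewrite permM xi yi eqxx andbT; apply/asboolP; exists (mul h g); split.
  by rewrite actM ga ha.
by move=> j; rewrite actM gb hb permM.
Qed.

Lemma local_action_of g : act g alpha = alpha ->
  exists2 tau, tau \in L & forall i, b (tau i) = act g (b i).
Proof.
move=> ga.
have nb i : exists j, b j = act g (b i).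
  have : adj alpha (act g (b i)) by rewrite -{1}ga -act_adj -b_range; exists i.
  by rewrite -b_range => -[j _ <-]; exists j.
have [t tP] := choice nb.
have t_inj : injective t.
  by move=> i j /(congr1 b); rewrite !tP => /(can_inj (act_invK g)) /b_inj.
exists (perm t_inj); last by move=> i; rewrite permE tP.
by rewrite inE; apply/asboolP; exists g; split=> // i; rewrite permE tP.
Qed.

Lemma prime_dvd_point_stab_at g p i0 : prime p ->
  act g alpha = alpha -> act g (b i0) = b i0 ->
  (exists2 v, adj alpha v & act g v <> v) ->
  (forall v, adj alpha v -> iter p (act g) v = v) ->
  (p %| #|perm_point_stab L i0|)%N.
Proof.
move=> pp ga gi0 [v av gv] gp.
have [tau tauL tauP] := local_action_of ga.
have tau_stab : tau \in perm_point_stab L i0.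
  by rewrite inE tauL; apply/eqP/b_inj; rewrite tauP.
have tau_neq1 : tau != 1%g.
  apply/eqP => tau1; apply: gv; move: av; rewrite -b_range => -[j _ <-].
  by rewrite -tauP tau1 perm1.
have tau_iter k i : b (iter k tau i) = iter k (act g) (b i).
  by elim: k => //= k <-; rewrite tauP.
have tau_p : (tau ^+ p)%g = 1%g.
  apply/permP => i; apply: b_inj; rewrite permX perm1 tau_iter gp //.
  by rewrite -b_range; exists i.
have -> : p = #[tau]%g.
  have : (#[tau]%g %| p)%N by rewrite cyclic.order_dvdn tau_p.
  by case/primeP: pp => _ pdiv /pdiv /orP [|/eqP //]; rewrite order_eq1 (negbTE tau_neq1).
exact: (cyclic.order_dvdG (G := Group (perm_point_stab_group i0)) tau_stab).
Qed.

Lemma prime_dvd_point_stab g p u u' : prime p -> adj u' u ->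
  act g u = u -> act g u' = u' ->
  (exists2 v, adj u v & act g v <> v) ->
  (forall v, adj u v -> iter p (act g) v = v) ->
  exists i, (p %| #|perm_point_stab L i|)%N.
Proof.
move=> pp u'u gu gu' [v uv gv] gp.
have [h hu] := transitive u alpha.
pose g' := mul h (mul g (inv h)).
have g'E w : act g' w = act h (act g (act (inv h) w)) by rewrite !actM.
have hia : act (inv h) alpha = u by rewrite -hu act_invK.
have [i0 i0P] : exists i0, b i0 = act h u'.
  have : adj alpha (act h u') by rewrite -hu -act_adj; exact: adj_sym.
  by rewrite -b_range => -[i _ <-]; exists i.
exists i0; apply: (prime_dvd_point_stab_at (g := g')) => //.
- by rewrite g'E hia gu.
- by rewrite i0P g'E act_invK gu'.
- exists (act h v); first by rewrite -hu -act_adj.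
  by rewrite g'E act_invK => /(can_inj (act_invK h)).
- move=> w aw; rewrite /g' (iter_act_conj GA act1 actM) gp ?(act_invKV GA act1 actM) //.
  by rewrite -hia -act_adj.
Qed.

Lemma local_prime_content_point_stab p :
  local_prime_content qmul qinv qone p -> exists i, (p %| #|perm_point_stab L i|)%N.
Proof.
case=> pp /(_ _ quot_pointwise_stab_ball1) [VQ [[VQ_subgroup _ VQ_open] VQW dvdW]].
have [R stabR] : exists R, pointwise_stab act (ball R) `<=` pi @^-1` VQ.
  apply: (pointwise_stab_ball_sub_open VQ_open) => k Kk /=.
  by rewrite (quot_pi_kernel GA K_subgroup Kk); case: VQ_subgroup.
have [s s_ball] := graph_ball_enum alpha locally_finite R.
have [g Wg [moved periodic]] :=
  exists_prime_order_motion s_ball pp VQ_subgroup VQW dvdW stabR.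
have [u [u' [u'u gu gu' gmoves uR]]] := exists_fixed_edge_at_moved Wg moved.
apply: (prime_dvd_point_stab pp u'u gu gu' gmoves) => v uv.
exact: periodic (uR v uv).
Qed.

End LocalAction.

End CayleyAbels.

Unset Implicit Arguments.

Theorem mainTheorem18 (G : topologicalType) (mul : G -> G -> G) (inv : G -> G)
  (one : G) (V : Type) (adj : V -> V -> Prop) (act : G -> V -> V) (d : nat) :
  tdlc_group mul inv one ->
  compactly_generated mul inv one ->
  ~ compact [set: G] ->
  cayley_abels_graph mul one adj act d ->
  let K := action_kernel act in
  (forall (alpha : V) (b : 'I_d -> V), injective b -> range b = adj alpha ->
     forall p : nat,
       local_prime_content (@quot_mul G mul K)
         (@quot_inv G mul K inv) (quot_one mul K one) p ->
       exists i : 'I_d,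
         (p %| #|perm_point_stab (local_action act alpha b) i|)%N)
  /\ finite_set (local_prime_content (@quot_mul G mul K)
                   (@quot_inv G mul K inv) (quot_one mul K one)).
Proof.
move=> [GA [mul_cont _] _ _ _] _ _.
move=> [[adj_sym _] [[v0] conn] nbhd [act1 actM act_adj] [trans stab_compact_open]] K.
have point_stab := local_prime_content_point_stab GA mul_cont adj_sym conn nbhd
  act1 actM act_adj trans stab_compact_open.
split=> //; have [b [b_inj b_range]] := nbhd v0.
apply: (@sub_finite_set _ _ `I_(d`!).+1) (finite_II _) => p.
case/(point_stab _ _ b_inj b_range) => i p_dvd.
rewrite /= ltnS -(card_Sn d); apply: leq_trans (dvdn_leq _ p_dvd) (max_card _).
exact: cardG_gt0 (Group (perm_point_stab_group act1 actM v0 b i)).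
Qed.
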